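(* Let $\Theta\subseteq\mathbb{R}$ be an interval (the parameter space), $X$ a sample space, and let $p(x\mid\theta)>0$ for all $x\in X$, $\theta\in\Theta$ be the sampling probability (or density) of $x$ given $\theta$. Suppose that to every single observation $x\in X$ a probability density $f(\theta\mid x)$ on $\Theta$ is assigned, and that a second, independent observation $x_2$ is taken into account by Bayes' rule, $$f(\theta\mid x_1x_2)=\frac{f(\theta\mid x_1)\,p(x_2\mid\theta)}{\int_\Theta f(\theta'\mid x_1)\,p(x_2\mid\theta')\,d\theta'} ,$$ where the denominators are finite and positive. Then the following are equivalent: (i) the result is invariant under reversing the order of the two observations, i.e. for all $x_1,x_2\in X$ and all $\theta\in\Theta$, $$\frac{f(\theta\mid x_1)\,p(x_2\mid\theta)}{\int_\Theta f(\theta'\mid x_1)\,p(x_2\mid\theta')\,d\theta'}=\frac{f(\theta\mid x_2)\,p(x_1\mid\theta)}{\int_\Theta f(\theta'\mid x_2)\,p(x_1\mid\theta')\,d\theta'} ;$$ (ii) there exists a nonnegative function $\pi$ on $\Theta$ (independent of $x$) such that for every $x\in X$, $\int_\Theta \pi(\theta')p(x\mid\theta')\,d\theta'\in(0,\infty)$ and $$f(\theta\mid x)=\frac{\pi(\theta)\,p(x\mid\theta)}{\int_\Theta\pi(\theta')\,p(x\mid\theta')\,d\theta'}\quad\text{for all }\theta\in\Theta .$$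
   Context: The function $\pi$ in (ii) is called the consistency factor; it is only a proportionality coefficient and is not required to be integrable over $\Theta$. *)

From HB Require Import structures.
From mathcomp Require Import all_boot all_order all_algebra.
From mathcomp Require Import all_classical all_reals all_analysis.
Set Implicit Arguments. Unset Strict Implicit. Unset Printing Implicit Defensive.
Import Order.TTheory GRing.Theory Num.Theory.
Local Open Scope classical_set_scope.
Local Open Scope ring_scope.

Definition intTheta (R : realType) (Theta : set R) (g : R -> R) : \bar R :=
  (\int[@lebesgue_measure R]_(t in Theta) (g t)%:E)%E.

Definition density_on (R : realType) (Theta : set R) (g : R -> R) : Prop :=
  measurable_fun Theta g /\ (forall t, Theta t -> 0 <= g t) /\
  intTheta Theta g = 1%E.

Definition bayes_update (R : realType) (X : Type) (Theta : set R)
  (f : X -> R -> R) (p : X -> R -> R) (x1 x2 : X) (t : R) : R :=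
  f x1 t * p x2 t / fine (intTheta Theta (fun s => f x1 s * p x2 s)).

Definition finite_pos (R : realType) (e : \bar R) : Prop :=
  (0 < e)%E /\ (e < +oo)%E.

From HB Require Import structures.
From mathcomp Require Import all_boot all_order all_algebra.
From mathcomp Require Import all_classical all_reals all_analysis.
From mathcomp Require Import ring measurable_realfun.
Import Order.TTheory GRing.Theory Num.Theory.
Local Open Scope classical_set_scope.
Local Open Scope ring_scope.

(* If the updates commute, then [f x0 / p x0] is a consistency factor for any
   fixed observation [x0]: swapping [x0] and [x] shows that
   [f x0 * p x / p x0] is a constant multiple of [f x], and the constant is
   recovered by integrating, since [f x] is a density.  Conversely, if
   [f x] is proportional to [pi * p x], then the update of [f x1] by [x2] is
   proportional to [pi * p x1 * p x2], which is symmetric in [x1, x2]; both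
   are normalised, hence equal. *)

Lemma finite_posP {R : realType} {e : \bar R} :
  finite_pos e -> exists2 z : R, 0 < z & e = z%:E.
Proof. by case: e => [z| |] [e_gt0 e_ltoo] //; exists z; rewrite -?lte_fin. Qed.

Lemma intTheta_scale {R : realType} {Theta : set R} {g h : R -> R} {c : R} :
  measurable Theta -> measurable_fun Theta g ->
  (forall t, Theta t -> 0 <= g t) -> 0 <= c ->
  (forall t, Theta t -> h t = c * g t) ->
  intTheta Theta h = (c%:E * intTheta Theta g)%E.
Proof.
move=> mT mg g_ge0 c_ge0 hE; rewrite /intTheta.
transitivity (\int[@lebesgue_measure R]_(t in Theta) (c%:E * (g t)%:E))%E.
  by apply: eq_integral => t; rewrite inE => Tt; rewrite hE.
by apply: ge0_integralZl_EFin => //; exact/measurable_EFinP.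
Qed.

Section ConsistencyFactor.
Variables (R : realType) (Theta : set R) (X : Type) (p f : X -> R -> R).
Hypothesis mTheta : measurable Theta.
Hypothesis p_gt0 : forall x t, Theta t -> 0 < p x t.
Hypothesis mp : forall x, measurable_fun Theta (p x).
Hypothesis f_density : forall x, density_on Theta (f x).
Hypothesis update_finite_pos :
  forall x1 x2, finite_pos (intTheta Theta (fun s => f x1 s * p x2 s)).

Let f_ge0 x t : Theta t -> 0 <= f x t.
Proof. by case: (f_density x) => _ [+ _]; apply. Qed.

Let measurable_update x1 x2 : measurable_fun Theta (fun s => f x1 s * p x2 s).
Proof. by apply: measurable_funM => //; case: (f_density x1). Qed.

Let update_ge0 x1 x2 s : Theta s -> 0 <= f x1 s * p x2 s.
Proof. by move=> Ts; rewrite mulr_ge0 ?f_ge0 // ltW ?p_gt0. Qed.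

Lemma commuting_updates_proportional x0 x :
  (forall t, Theta t ->
     bayes_update Theta f p x0 x t = bayes_update Theta f p x x0 t) ->
  exists2 c, 0 < c & forall t, Theta t -> f x0 t / p x0 t * p x t = c * f x t.
Proof.
move=> swap.
have [a a_gt0 Ea] := finite_posP (update_finite_pos x0 x).
have [b b_gt0 Eb] := finite_posP (update_finite_pos x x0).
exists (a / b); first by rewrite divr_gt0.
move=> t Tt; have := swap t Tt; rewrite /bayes_update Ea Eb /= => e.
have p_neq0 : p x0 t != 0 by rewrite gt_eqF ?p_gt0.
have a_neq0 : a != 0 by rewrite gt_eqF.
have b_neq0 : b != 0 by rewrite gt_eqF.
have {}e : f x0 t * p x t = a * (f x t * p x0 t / b).
  by rewrite -e; field; rewrite a_neq0.
by rewrite mulrAC e; field; rewrite p_neq0 b_neq0.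
Qed.

Lemma commuting_updates_consistency_factor x0 :
  (forall x1 x2 t, Theta t ->
     bayes_update Theta f p x1 x2 t = bayes_update Theta f p x2 x1 t) ->
  let pi t := f x0 t / p x0 t in
  (forall t, Theta t -> 0 <= pi t) /\
  forall x,
    finite_pos (intTheta Theta (fun s => pi s * p x s)) /\
    forall t, Theta t ->
      f x t = pi t * p x t / fine (intTheta Theta (fun s => pi s * p x s)).
Proof.
move=> swap pi; split=> [t Tt|x].
  by rewrite divr_ge0 ?f_ge0 // ltW ?p_gt0.
have [c c_gt0 pi_pE] := commuting_updates_proportional _ _ (swap x0 x).
case: (f_density x) => mf [_ int_f].
rewrite (intTheta_scale mTheta mf (f_ge0 x) (ltW c_gt0) pi_pE) int_f mule1 /=.
split; first by split; rewrite ?lte_fin ?ltry.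
by move=> t Tt; rewrite pi_pE //; field; rewrite gt_eqF.
Qed.

Lemma bayes_update_consistency_factor (pi : R -> R) :
  (forall x,
    finite_pos (intTheta Theta (fun s => pi s * p x s)) /\
    forall t, Theta t ->
      f x t = pi t * p x t / fine (intTheta Theta (fun s => pi s * p x s))) ->
  forall x1 x2 t, Theta t ->
  bayes_update Theta f p x1 x2 t =
  pi t * p x1 t * p x2 t /
    fine (intTheta Theta (fun s => pi s * p x1 s * p x2 s)).
Proof.
move=> pi_factor x1 x2 t Tt.
have [N N_gt0 EN] := finite_posP (pi_factor x1).1.
have f_piE := (pi_factor x1).2; rewrite EN /= in f_piE.
have [z z_gt0 Ez] := finite_posP (update_finite_pos x1 x2).
have -> : intTheta Theta (fun s => pi s * p x1 s * p x2 s) = (N * z)%:E.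
  rewrite EFinM -Ez; apply: (intTheta_scale mTheta (measurable_update x1 x2)
    (update_ge0 x1 x2) (ltW N_gt0)) => s Ts.
  by rewrite f_piE //; field; rewrite gt_eqF.
rewrite /bayes_update Ez /= f_piE //.
by field; rewrite !gt_eqF.
Qed.

End ConsistencyFactor.

Theorem mainTheorem1 (R : realType) (Theta : set R) (X : Type)
  (p : X -> R -> R) (f : X -> R -> R) :
  is_interval Theta ->
  (forall x t, Theta t -> 0 < p x t) ->
  (forall x, measurable_fun Theta (p x)) ->
  (forall x, density_on Theta (f x)) ->
  (forall x1 x2, finite_pos (intTheta Theta (fun s => f x1 s * p x2 s))) ->
  (forall x1 x2 t, Theta t ->
      bayes_update Theta f p x1 x2 t = bayes_update Theta f p x2 x1 t)
  <->
  (exists pi : R -> R,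
     (forall t, Theta t -> 0 <= pi t) /\
     forall x,
       finite_pos (intTheta Theta (fun s => pi s * p x s)) /\
       forall t, Theta t ->
         f x t = pi t * p x t / fine (intTheta Theta (fun s => pi s * p x s))).
Proof.
move=> /is_interval_measurable mTheta p_gt0 mp f_density update_finite_pos.
split=> [swap|[pi [_ pi_factor]] x1 x2 t Tt].
- have [[x0 _]|noX] := pselect (exists x : X, True).
    exists (fun t => f x0 t / p x0 t).
    exact: (commuting_updates_consistency_factor _ _ _ _ _ mTheta p_gt0
      f_density update_finite_pos x0 swap).
  by exists (fun=> 0); split=> // x; exfalso; apply: noX; exists x.
- rewrite !(bayes_update_consistency_factor _ _ _ _ _ mTheta p_gt0 mp f_density
    update_finite_pos _ pi_factor) //.
  have swap_integrand : (fun s => pi s * p x2 s * p x1 s) =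
                         (fun s => pi s * p x1 s * p x2 s).
    by apply/funext => s; rewrite mulrAC.
  by rewrite swap_integrand [pi t * p x2 t * _]mulrAC.
Qed.
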